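(* Let $X$ be a compact metric space, $T:X\to X$ continuous, and $\Phi=\{\phi_n\}$ a supadditive potential on $X$. Fix a positive integer $k$. Then for every subset $Z\subseteq X$, \[ P_Z(T,\Phi)\ge P_Z\big(T,\tfrac1k\phi_k\big). \]
   Context: $B_n(x,\epsilon)=\{y:d(T^ix,T^iy)<\epsilon,\ 0\le i\le n-1\}$. Supadditive potential: continuous $\phi_n$ with $\phi_{n+m}(x)\ge\phi_n(x)+\phi_m(T^nx)$. For $Z\subseteq X$, $\epsilon>0$, a cover of $Z$ is a countable family $\Gamma=\{B_{n_i}(x_i,\epsilon)\}$ covering $Z$, $n(\Gamma)=\min n_i$. $P_Z(T,\Phi)$: $M(Z,\Phi,s,N,\epsilon)=\inf_\Gamma\sum_i\exp(-sn_i+\phi_{n_i}(x_i))$ over covers with $n(\Gamma)\ge N$; $m(Z,\Phi,s,\epsilon)=\lim_NM$; $P_Z(T,\Phi,\epsilon)=\inf\{s:m(Z,\Phi,s,\epsilon)=0\}$; $P_Z(T,\Phi)=\liminf_{\epsilon\to0}P_Z(T,\Phi,\epsilon)$. For a continuous function $\psi$, $P_Z(T,\psi)$ is defined with the sequence $g_n=\sum_{i=0}^{n-1}\psi\circ T^i$ and supremum over balls: $M(Z,\psi,s,N,\epsilon)=\inf_\Gamma\sum_i\exp(-sn_i+\sup_{y\in B_{n_i}(x_i,\epsilon)}g_{n_i}(y))$ over covers with $n(\Gamma)\ge N$, $m(Z,\psi,s,\epsilon)=\lim_NM$, $P_Z(T,\psi,\epsilon)=\inf\{s:m(Z,\psi,s,\epsilon)=0\}$,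 $P_Z(T,\psi)=\liminf_{\epsilon\to0}P_Z(T,\psi,\epsilon)$. *)

From HB Require Import structures.
From mathcomp Require Import all_boot all_order all_algebra.
From mathcomp Require Import all_classical all_reals all_analysis.
Set Implicit Arguments. Unset Strict Implicit. Unset Printing Implicit Defensive.
Import Order.TTheory GRing.Theory Num.Theory numFieldTopology.Exports.
Local Open Scope classical_set_scope.
Local Open Scope ring_scope.

Section Pressure.
Context {R : realType} {X : metricType R}.

Definition bowen_ball (T : X -> X) (n : nat) (x : X) (eps : R) : set X :=
  [set y | forall i : nat, (i < n)%N -> mdist (iter i T x) (iter i T y) < eps].

Definition bowen_cover (T : X -> X) (Z : set X) (N : nat) (eps : R)
  (I : set nat) (n : nat -> nat) (x : nat -> X) : Prop :=
  (forall i, I i -> (N <= n i)%N) /\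
  Z `<=` \bigcup_(i in I) bowen_ball T (n i) (x i) eps.

Definition M_gen (T : X -> X) (w : nat -> X -> \bar R) (Z : set X)
  (s : R) (N : nat) (eps : R) : \bar R :=
  ereal_inf [set v | exists (I : set nat) (n : nat -> nat) (x : nat -> X),
      bowen_cover T Z N eps I n x /\
      v = (\esum_(i in I) expeR ((- (s * (n i)%:R))%:E + w (n i) (x i)))%E].

Definition pressure_gen (T : X -> X) (w : R -> nat -> X -> \bar R) (Z : set X)
  : \bar R :=
  limf_einf
    (fun eps : R =>
       ereal_inf [set s%:E | s in
          [set s : R | limn (fun N => M_gen T (w eps) Z s N eps) = 0%E]])
    (at_right (0 : R)).

Definition pressure_seq (T : X -> X) (phi : nat -> X -> R) (Z : set X) : \bar R :=
  pressure_gen T (fun _ n x => (phi n x)%:E) Z.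

Definition birkhoff_sum (T : X -> X) (psi : X -> R) (n : nat) (y : X) : R :=
  \sum_(0 <= i < n) psi (iter i T y).

Definition pressure_fun (T : X -> X) (psi : X -> R) (Z : set X) : \bar R :=
  pressure_gen T
    (fun eps n x => ereal_sup [set (birkhoff_sum T psi n y)%:E
                              | y in bowen_ball T n x eps]) Z.

End Pressure.

Definition supadditive {R : realType} {X : metricType R} (T : X -> X)
  (phi : nat -> X -> R) : Prop :=
  (forall n, continuous (phi n)) /\
  forall (n m : nat) (x : X), (0 < n)%N -> (0 < m)%N ->
    phi n x + phi m (iter n T x) <= phi (n + m)%N x.

From HB Require Import structures.
From mathcomp Require Import all_boot all_order all_algebra.
From mathcomp Require Import all_classical all_reals all_analysis.
From mathcomp Require Import zify lra.
Import Order.TTheory GRing.Theory Num.Theory numFieldTopology.Exports.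
Local Open Scope classical_set_scope.
Local Open Scope ring_scope.

(* Supadditivity gives, for n > 0, the combinatorial bound
   [sum_{i<n} phi_k (T^i x) <= k (phi_n x + 3B)], where B bounds |phi_r| for
   r <= k: split the orbit segment of length n, started at each of the k
   offsets j < k, into consecutive blocks of length k.  Hence the Birkhoff
   sums of psi = phi_k / k are below phi_n + 3B.  By uniform continuity of psi
   on the compact space, the supremum of these Birkhoff sums over a Bowen ball
   B_n(x, eps) exceeds their value at x by at most n d once eps is small, so
   each term exp(-(s + d) n + sup g_n) of a cover is at most e^{3B} times
   exp(-s n + phi_n(x)).  Thus every s for which the Phi-measure vanishes gives
   an s + d for which the psi-measure vanishes, and d > 0 is arbitrary. *)

Section BirkhoffSum.
Context {R : realType} {X : metricType R} (T : X -> X).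

Lemma birkhoff_sum0 (f : X -> R) x : birkhoff_sum T f 0 x = 0.
Proof. by rewrite /birkhoff_sum big_geq. Qed.

Lemma birkhoff_sumS (f : X -> R) n x :
  birkhoff_sum T f n.+1 x = f x + birkhoff_sum T f n (T x).
Proof.
rewrite /birkhoff_sum big_nat_recl//; congr (_ + _).
by apply: eq_bigr => i _; rewrite iterSr.
Qed.

Lemma birkhoff_sum_bowen_ball_le {psi : X -> R} {eps d : R} {n x y} :
  (forall a b, mdist a b < eps -> `|psi a - psi b| < d) ->
  bowen_ball T n x eps y ->
  birkhoff_sum T psi n y <= birkhoff_sum T psi n x + n%:R * d.
Proof.
move=> psi_cont xy; rewrite /birkhoff_sum.
have -> : n%:R * d = \sum_(0 <= i < n) d by rewrite sumr_const_nat subn0 mulr_natl.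
rewrite -big_split /= big_nat_cond [X in _ <= X]big_nat_cond.
apply: ler_sum => i /andP[/andP[_ ilt] _].
have := psi_cont _ _ (xy i ilt); rewrite ltr_norml; lra.
Qed.

End BirkhoffSum.

Section BlockSums.
Context {R : realType} {X : metricType R} (T : X -> X).
Variables (phi : nat -> X -> R) (k : nat) (B : R).
Hypothesis k_gt0 : (0 < k)%N.
Hypothesis phi_supadd : forall (n m : nat) (x : X), (0 < n)%N -> (0 < m)%N ->
  phi n x + phi m (iter n T x) <= phi (n + m)%N x.
Hypothesis phi_bound : forall r x, (r <= k)%N -> `|phi r x| <= B.

Definition block_sum (n : nat) (x : X) : R :=
  \sum_(l < n %/ k) phi k (iter (l * k) T x).

Lemma block_sum_small n x : (n < k)%N -> block_sum n x = 0.
Proof. by move=> nk; rewrite /block_sum divn_small// big_ord0. Qed.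

Lemma block_sum0 x : block_sum 0 x = 0.
Proof. exact: block_sum_small. Qed.

Lemma block_sumE n x : (k <= n)%N ->
  block_sum n x = phi k x + block_sum (n - k) (iter k T x).
Proof.
move=> kn; rewrite /block_sum.
have -> : (n %/ k = ((n - k) %/ k).+1)%N.
  by rewrite -{1}(subnK kn) -{2}(mul1n k) divnDMl// addn1.
rewrite big_ord_recl /=; congr (_ + _).
by apply: eq_bigr => l _; rewrite /bump /= add1n mulSnr iterD.
Qed.

Lemma phi_ge_bound r x : (r <= k)%N -> - B <= phi r x.
Proof. by move/(phi_bound r x); rewrite ler_norml => /andP[]. Qed.

Lemma phi_le_bound r x : (r <= k)%N -> phi r x <= B.
Proof. by move/(phi_bound r x); rewrite ler_norml => /andP[]. Qed.

Lemma block_sum_le_phi n x : (0 < n)%N -> block_sum n x - B <= phi n x.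
Proof.
elim/ltn_ind: n x => n IH x n_gt0.
have [nk|kn] := ltnP n k.
  by rewrite block_sum_small// sub0r phi_ge_bound// ltnW.
rewrite block_sumE//.
have [nk0|nk_gt0] := posnP (n - k).
  have -> : n = k by lia.
  by rewrite subnn block_sum0 addr0 lerBlDr lerDl (le_trans _ (phi_bound k x _)).
have := phi_supadd _ _ x k_gt0 nk_gt0; rewrite subnKC//.
have := IH (n - k)%N ltac:(lia) (iter k T x) nk_gt0; lra.
Qed.

Lemma block_sum_shift_le_phi n j x : (0 < n)%N -> (j < k)%N ->
  block_sum (n - j) (iter j T x) - 2 * B <= phi n x.
Proof.
move=> n_gt0 jk; have B_ge0 : 0 <= B by apply: le_trans (phi_bound k x _).
have [->|j_gt0] := posnP j.
  by have := block_sum_le_phi n x n_gt0; rewrite subn0; lra.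
have [jn|nj] := ltnP j n; last first.
  rewrite (_ : n - j = 0)%N; last by lia.
  by rewrite block_sum0; have := @phi_ge_bound n x ltac:(lia); lra.
have nj_gt0 : (0 < n - j)%N by lia.
have := phi_supadd _ _ x j_gt0 nj_gt0; rewrite subnKC; last by lia.
have := block_sum_le_phi (n - j) (iter j T x) nj_gt0.
have := @phi_ge_bound j x (ltnW jk); lra.
Qed.

Definition shifted_block_sums n x : R :=
  \sum_(0 <= j < k) block_sum (n - j) (iter j T x).

Lemma shifted_block_sums0 x : shifted_block_sums 0 x = 0.
Proof. by rewrite /shifted_block_sums big1// => j _; rewrite sub0n block_sum0. Qed.

(* Advancing x to T x only loses the block starting at x itself, which is a
   full block iff k <= n.+1. *)
Lemma shifted_block_sumsS n x : shifted_block_sums n.+1 x =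
  (if (k <= n.+1)%N then phi k x else 0) + shifted_block_sums n (T x).
Proof.
rewrite /shifted_block_sums; case: k k_gt0 block_sumE block_sum_small => // k'.
move=> _ recE smallE; rewrite big_nat_recl// big_nat_recr//= subn0.
under eq_bigr => j _ do rewrite subSS -iterS iterSr.
rewrite [RHS]addrCA [LHS]addrC; congr (_ + _).
have [kn|nk] := leqP k'.+1 n.+1; first by rewrite recE// subSS iterSr.
by rewrite smallE// add0r (_ : n - k' = 0)%N ?block_sum0//; lia.
Qed.

Lemma birkhoff_sum_le_shifted_block_sums n x :
  birkhoff_sum T (phi k) n x <= shifted_block_sums n x + (minn n k)%:R * B.
Proof.
have B_ge0 : 0 <= B by apply: le_trans (phi_bound k x _).
elim: n x => [|n IH] x.
  by rewrite birkhoff_sum0 shifted_block_sums0 min0n mul0r addr0.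
rewrite birkhoff_sumS shifted_block_sumsS; have := IH (T x).
have [kn|nk] := leqP k n.+1.
  have : (minn n k)%:R * B <= k%:R * B by rewrite ler_wpM2r// ler_nat; lia.
  lra.
rewrite (_ : minn n k = n); last by lia.
have : n.+1%:R * B = n%:R * B + B by rewrite -natr1 mulrDl mul1r.
have := phi_le_bound k x (leqnn k); lra.
Qed.

Lemma birkhoff_sum_le_phi n x : (0 < n)%N ->
  birkhoff_sum T (phi k) n x <= k%:R * (phi n x + 3 * B).
Proof.
move=> n_gt0; have B_ge0 : 0 <= B by apply: le_trans (phi_bound k x _).
have : (minn n k)%:R * B <= k%:R * B by rewrite ler_wpM2r// ler_nat; lia.
have : shifted_block_sums n x <= k%:R * (phi n x + 2 * B).
  rewrite /shifted_block_sums big_mkord.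
  apply: (le_trans (y := \sum_(j < k) (phi n x + 2 * B))).
    apply: ler_sum => j _.
    by have := block_sum_shift_le_phi n j x n_gt0 (ltn_ord j); lra.
  by rewrite sumr_const card_ord [X in _ <= X]mulr_natl.
have := birkhoff_sum_le_shifted_block_sums n x; lra.
Qed.

End BlockSums.

Section Compactness.
Context {R : realType} {X : metricType R}.
Hypothesis X_compact : compact [set: X].

Lemma continuous_bounded (f : X -> R) :
  continuous f -> exists M, forall x, `|f x| <= M.
Proof.
move=> f_cont.
have [M [_ fM]] := compact_bounded (continuous_compact
  (continuous_subspaceT f_cont) X_compact).
by exists (M + 1) => x; apply: fM (f x) _; [rewrite ltrDl | exists x].
Qed.

Lemma continuous_bounded_upto (phi : nat -> X -> R) k :
  (forall n, continuous (phi n)) ->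
  exists B, forall r x, (r <= k)%N -> `|phi r x| <= B.
Proof.
move=> phi_cont; elim: k => [|k [B phiB]].
  have [M phiM] := continuous_bounded _ (phi_cont 0%N).
  by exists M => r x; rewrite leqn0 => /eqP ->.
have [M phiM] := continuous_bounded _ (phi_cont k.+1).
exists (Num.max M B) => r x; rewrite le_max leq_eqVlt => /orP[/eqP ->|rk].
  by rewrite phiM.
by rewrite phiB ?orbT.
Qed.

Lemma continuous_uniform (f : X -> R) : continuous f -> forall d, 0 < d ->
  \forall e \near 0^'+, forall a b, mdist a b < e -> `|f a - f b| < d.
Proof.
move=> f_cont d d_gt0.
suff : \forall e \near 0^'+, [set: X] `<=`
    (fun a => forall b, mdist a b < e -> `|f a - f b| < d).
  by apply: filterS => e fe a; apply: fe.
apply: (iffLR (compact_near_coveringP _) X_compact) => x _.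
have /cvgrPdist_lt/(_ (d / 2)) := f_cont x.
rewrite divr_gt0// => /(_ isT) /nbhs_ballP [r /= r_gt0 fr].
exists (ball x (r / 2), [set e | e < r / 2]).
  split=> /=; first by apply: nbhsx_ballx; rewrite divr_gt0.
  by apply: nbhs_right_lt; rewrite divr_gt0.
case=> a e [/= + er] b ab; rewrite ballEmdist /= => xa.
have fa : `|f x - f a| < d / 2 by apply: fr; rewrite ballEmdist /=; lra.
have fb : `|f x - f b| < d / 2.
  by apply: fr; rewrite ballEmdist /=; have := metric_triangle x a b; lra.
have := ler_distD (f x) (f a) (f b); rewrite distrC in fa; lra.
Qed.

End Compactness.

Section ExtendedReals.
Context {R : realType}.
Local Open Scope ereal_scope.

Lemma esumZl_le (I : choiceType) (D : set I) (a : I -> \bar R) (c : R) :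
  (0 <= c)%R -> (forall i, 0 <= a i) ->
  \esum_(i in D) (c%:E * a i) <= c%:E * \esum_(i in D) a i.
Proof.
move=> c_ge0 a_ge0; apply: ge_ereal_sup => _ [A finA <-].
rewrite -ge0_mule_fsumr// lee_wpmul2l ?lee_fin//.
by apply: le_ereal_sup_tmp; exists (\sum_(i \in A) a i)%R => //; exists A.
Qed.

Lemma nondecreasing_limn_eq0 (u : (\bar R)^nat) :
  nondecreasing_seq u -> (forall N, 0 <= u N) ->
  limn u = 0 <-> forall N, (0 < N)%N -> u N = 0.
Proof.
move=> u_nd u_ge0; split => [u0 N _|u0].
  apply/eqP; rewrite eq_le u_ge0 andbT -u0.
  rewrite (cvg_lim _ (ereal_nondecreasing_cvgn u_nd))//.
  by apply: le_ereal_sup_tmp; exists (u N) => //; exists N.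
have -> : u = fun=> 0.
  apply/funext => -[|N]; last exact: u0.
  by apply/eqP; rewrite eq_le u_ge0 andbT -(u0 1%N)// u_nd.
exact/lim_cst.
Qed.

Lemma ereal_inf_EFin_le_shift (A B : set R) (d : R) :
  (forall s, B s -> A (s + d)%R) ->
  ereal_inf [set s%:E | s in A] <= ereal_inf [set s%:E | s in B] + d%:E.
Proof.
move=> BA; rewrite -leeBlDr//; apply/ereal_infP => _ [s Bs <-].
rewrite leeBlDr// -EFinD; apply: ereal_inf_lbound.
by exists (s + d)%R => //; apply: BA.
Qed.

Lemma limf_einf_leD (T : choiceType) (U : filteredType T) (F : set_system U)
  (f g : U -> \bar R) (d : R) :
  Filter F -> (\forall t \near F, f t <= g t + d%:E) ->
  limf_einf f F <= limf_einf g F + d%:E.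
Proof.
move=> FF fg; rewrite !limf_einfE; apply: ge_ereal_sup => _ [V FV <-].
set W := V `&` [set t | f t <= g t + d%:E].
have FW : F W by apply: filterI.
apply: (@le_trans _ _ (ereal_inf (g @` W) + d%:E)).
  rewrite -leeBlDr//; apply/ereal_infP => _ [t [Vt fgt] <-].
  by rewrite leeBlDr//; apply: le_trans fgt; apply: ereal_inf_lbound; exists t.
by rewrite leeD2r//; apply: ereal_sup_ubound; exists W.
Qed.

End ExtendedReals.

Section Pressure.
Context {R : realType} {X : metricType R} (T : X -> X).
Local Open Scope ereal_scope.

Lemma M_gen_ge0 w Z s N eps : 0 <= M_gen T w Z s N eps.
Proof.
apply/ereal_infP => _ [I [n [x [_ ->]]]]; apply: esum_ge0 => i _.
exact: expeR_ge0.
Qed.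

Lemma M_gen_nondecreasing w Z s eps :
  nondecreasing_seq (fun N => M_gen T w Z s N eps).
Proof.
move=> N N' NN'; apply: le_ereal_inf => _ [I [n [x [[nN cover] ->]]]].
by exists I, n, x; split=> //; split=> // i Ii; apply: leq_trans NN' (nN i Ii).
Qed.

Lemma limn_M_gen_eq0 w Z s eps :
  limn (fun N => M_gen T w Z s N eps) = 0 <->
  forall N, (0 < N)%N -> M_gen T w Z s N eps = 0.
Proof.
apply: nondecreasing_limn_eq0; first exact: M_gen_nondecreasing.
by move=> N; apply: M_gen_ge0.
Qed.

Lemma M_gen_le_scale (w1 w2 : nat -> X -> \bar R) Z (s d c : R) N eps :
  (0 < c)%R -> (0 < N)%N ->
  (forall n x, (0 < n)%N -> expeR ((- ((s + d) * n%:R))%:E + w1 n x) <=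
      c%:E * expeR ((- (s * n%:R))%:E + w2 n x)) ->
  M_gen T w1 Z (s + d) N eps <= c%:E * M_gen T w2 Z s N eps.
Proof.
move=> c_gt0 N_gt0 w12; rewrite -ereal_inf_pZl//.
apply/ereal_infP => _ [_ [I [n [x [[nN cover] ->]]]] <-].
apply: le_trans (esumZl_le _ _ _ _ (ltW c_gt0) (fun i => expeR_ge0 _)).
apply: ge_ereal_inf; eexists; first by exists I, n, x.
by apply: le_esum => i Ii; apply: w12; apply: leq_trans N_gt0 (nN i Ii).
Qed.

Lemma pressure_gen_le (w1 w2 : R -> nat -> X -> \bar R) Z :
  (forall d : R, (0 < d)%R -> \forall eps \near 0^'+, forall s : R,
     limn (fun N => M_gen T (w2 eps) Z s N eps) = 0 ->
     limn (fun N => M_gen T (w1 eps) Z (s + d) N eps) = 0) ->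
  pressure_gen T w1 Z <= pressure_gen T w2 Z.
Proof.
move=> w12; apply/lee_addgt0Pr => d d_gt0; apply: limf_einf_leD.
by apply: filterS (w12 d d_gt0) => eps; apply: ereal_inf_EFin_le_shift.
Qed.

Lemma expeR_bowen_sup_le (psi : X -> R) (eps d s C v : R) (n : nat) (x : X) :
  (forall a b, mdist a b < eps -> `|psi a - psi b| < d)%R ->
  (birkhoff_sum T psi n x <= v + C)%R ->
  expeR ((- ((s + d) * n%:R))%:E +
         ereal_sup [set (birkhoff_sum T psi n y)%:E | y in bowen_ball T n x eps])
  <= (expR C)%:E * expeR ((- (s * n%:R))%:E + v%:E).
Proof.
move=> psi_unif psi_le.
have sup_le : ereal_sup [set (birkhoff_sum T psi n y)%:E | y in bowen_ball T n x eps]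
    <= (v + C + n%:R * d)%:E.
  apply: ge_ereal_sup => _ [y xy <-]; rewrite lee_fin.
  by have := birkhoff_sum_bowen_ball_le T psi_unif xy; lra.
apply: (@le_trans _ _ (expeR ((- ((s + d) * n%:R) + (v + C + n%:R * d))%:E))).
  by rewrite lee_expeR EFinD leeD2l.
rewrite -EFinD /= -EFinM lee_fin -expRD ler_expR; lra.
Qed.

End Pressure.

Theorem lemma4p1 (R : realType) (X : metricType R) (T : X -> X)
  (phi : nat -> X -> R) (k : nat) :
  compact [set: X] -> continuous T -> supadditive T phi -> (0 < k)%N ->
  forall Z : set X,
    (pressure_fun T (fun x => (phi k x / k%:R)%R) Z <= pressure_seq T phi Z)%E.
Proof.
move=> X_compact _ [phi_cont phi_supadd] k_gt0 Z.
set psi := fun x => (phi k x / k%:R)%R.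
have [B phiB] := continuous_bounded_upto X_compact _ k phi_cont.
have psi_le n x : (0 < n)%N -> birkhoff_sum T psi n x <= phi n x + 3 * B.
  move=> n_gt0; rewrite /birkhoff_sum /psi -mulr_suml ler_pdivrMr ?ltr0n//.
  by rewrite mulrC; apply: birkhoff_sum_le_phi.
have psi_cont : continuous psi.
  by move=> x; apply: cvgM; [exact: phi_cont | exact: cvg_cst].
apply: pressure_gen_le => d d_gt0.
apply: filterS (continuous_uniform X_compact _ psi_cont _ d_gt0) => eps psi_unif s.
move=> /limn_M_gen_eq0 M0; apply/limn_M_gen_eq0 => N N_gt0.
apply/eqP; rewrite eq_le M_gen_ge0 andbT -(mule0 (expR (3 * B))%:E) -(M0 N N_gt0).
apply: M_gen_le_scale => // [|n x n_gt0]; first exact: expR_gt0.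
exact: expeR_bowen_sup_le psi_unif (psi_le n x n_gt0).
Qed.
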